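(* Let $m,n\ge1$, let $a_1,\dots,a_n\in\mathbb{C}$ be distinct, let $m_1,\dots,m_n\ge 1$ be integers, let $c_0,\dots,c_{m-1},b_k^{(j)}\in\mathbb{C}$, and let $$r(\lambda)=\lambda^m-c_{m-1}\lambda^{m-1}-\cdots-c_1\lambda-c_0-\sum_{j=1}^n\sum_{k=1}^{m_j}\frac{b_k^{(j)}}{(\lambda-a_j)^k}.$$ If $\lambda_0$ is a zero of $r$, then (1) $|\lambda_0|\le \max_{1\le j\le n}\Big\{1+|a_j|,\ \sum_{j=1}^n\sum_{k=1}^{m_j}|b_k^{(j)}|+\sum_{i=0}^{m-1}|c_i|\Big\}$; (2) if every $m_j=1$ (writing $b^{(j)}=b^{(j)}_1$), then $|\lambda_0|\le\max_{1\le j\le n,\,1\le i\le m-1}\{|a_j|+|b^{(j)}|,\ 1+|c_i|,\ |c_0|+n\}$; otherwise $|\lambda_0|\le \max_{1\le j\le n,\,1\le k\le m_j,\,1\le i\le m-1}\Big\{|a_j|+|b_k^{(j)}|,\ 1+|a_j|,\ 1+|c_i|,\ |c_0|+\sum_{j=1}^n m_j\Big\}$.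
   Context: A zero of $r$ is a $\lambda_0\in\mathbb{C}\setminus\{a_1,\dots,a_n\}$ with $r(\lambda_0)=0$. *)

From HB Require Import structures.
From mathcomp Require Import all_boot all_order all_algebra.
From mathcomp Require Import reals complex.
Set Implicit Arguments. Unset Strict Implicit. Unset Printing Implicit Defensive.
Import Order.TTheory GRing.Theory Num.Theory.
Local Open Scope ring_scope.

Definition ratfun {R : realType} (m n : nat) (c : nat -> R[i]) (a : 'I_n -> R[i])
  (mu : 'I_n -> nat) (b : 'I_n -> nat -> R[i]) (l : R[i]) : R[i] :=
  l ^+ m - \sum_(i < m) c i * l ^+ i
  - \sum_(j < n) \sum_(1 <= k < (mu j).+1) b j k / (l - a j) ^+ k.

Definition is_zero_of {R : realType} (m n : nat) (c : nat -> R[i]) (a : 'I_n -> R[i])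
  (mu : 'I_n -> nat) (b : 'I_n -> nat -> R[i]) (l : R[i]) : Prop :=
  (forall j, l != a j) /\ ratfun m c a mu b l = 0.

From HB Require Import structures.
From mathcomp Require Import all_boot all_order all_algebra.
From mathcomp Require Import reals complex.
From mathcomp Require Import lra.
Set Implicit Arguments. Unset Strict Implicit. Unset Printing Implicit Defensive.
Import Order.TTheory GRing.Theory Num.Theory.
Local Open Scope ring_scope.

(* Let L = |l0|.  Since r(l0) = 0, the triangle inequality gives
     L^m <= sum_i |c_i| L^i + sum_j sum_k |b_k^(j)| / |l0 - a_j|^k,
   where |l0 - a_j| >= L - |a_j|.  If L exceeds every 1 + |a_j|, all |l0 - a_j|
   are at least 1, so the right-hand side is at most (sum |b| + sum |c|) L^(m-1),
   which is (1).  For (2), if L exceeds the entries built from a_j, b_k^(j) and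
   c_i (i >= 1), every pole term is at most 1 and the bound |c_i| <= L - 1 makes
   sum_(1 <= i < m) |c_i| L^i telescope to at most L^m - L, leaving
   L <= |c_0| + (number of pole terms). *)

Lemma bigmax_lt_seqW d (T : orderType d) (I : eqType) (r : seq I) (P : pred I)
    (F : I -> T) (x0 y : T) :
  (\big[Order.max/x0]_(j <- r | P j) F j < y)%O ->
  forall i, i \in r -> P i -> (F i < y)%O.
Proof. by move=> lt_y i ri Pi; exact: le_lt_trans (le_bigmax_seq x0 i P F ri Pi) lt_y. Qed.

Lemma divr_le1 (F : numFieldType) (x y : F) : 0 <= x -> x <= y -> x / y <= 1.
Proof.
move=> x_ge0 le_xy; have [->|y_neq0] := eqVneq y 0; first by rewrite invr0 mulr0.
have y_gt0 : 0 < y by rewrite lt_def y_neq0 (le_trans x_ge0).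
by rewrite ler_pdivrMr // mul1r.
Qed.

Section RealRootBounds.
Variables (F : realFieldType) (m n : nat) (mu : 'I_n -> nat).
Variables (L : F) (A D : 'I_n -> F) (B : 'I_n -> nat -> F) (C : nat -> F).

Local Notation poles :=
  (\sum_(j < n) \sum_(1 <= k < (mu j).+1) B j k / D j ^+ k).

Hypothesis m_gt0 : (0 < m)%N.
Hypothesis L_ge0 : 0 <= L.
Hypothesis C_ge0 : forall i, 0 <= C i.
Hypothesis B_ge0 : forall j k, 0 <= B j k.
Hypothesis L_le_AD : forall j, L <= A j + D j.
Hypothesis root_ineq : L ^+ m <= \sum_(i < m) C i * L ^+ i + poles.

Lemma root_le_sum_coef :
  1 <= L -> (forall j, 1 + A j <= L) ->
  L <= \sum_(j < n) \sum_(1 <= k < (mu j).+1) B j k + \sum_(i < m) C i.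
Proof.
move=> L_ge1 AL; set SB := \sum_(j < n) _; set SC := \sum_(i < m) _.
have D_ge1 j : 1 <= D j by have := AL j; have := L_le_AD j; lra.
have poles_le : poles <= SB.
  apply: ler_sum => j _; apply: ler_sum => k _.
  by rewrite ler_piMr // invf_le1 ?exprn_ege1 // exprn_gt0 // (lt_le_trans ltr01).
have coef_le : \sum_(i < m) C i * L ^+ i <= SC * L ^+ m.-1.
  rewrite mulr_suml; apply: ler_sum => i _; rewrite ler_wpM2l //.
  by apply: ler_weXn2l; rewrite // -ltnS prednK.
have SB_ge0 : 0 <= SB by apply: sumr_ge0 => j _; apply: sumr_ge0.
have Lm1_ge1 : 1 <= L ^+ m.-1 by apply: exprn_ege1.
rewrite -(ler_pM2r (lt_le_trans ltr01 Lm1_ge1)) -exprS prednK //.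
apply: le_trans root_ineq _; rewrite mulrDl addrC lerD //.
by apply: le_trans poles_le _; rewrite ler_peMr.
Qed.

Lemma pole_term_le1 j k :
  (0 < k)%N -> A j + B j k <= L -> k = 1%N \/ 1 + A j <= L -> B j k / D j ^+ k <= 1.
Proof.
move=> k_gt0 ABL k1_or_AL; apply: divr_le1 (B_ge0 j k) _.
have B_le_D : B j k <= D j by have := L_le_AD j; lra.
case: k1_or_AL => [k1 | AL]; first by rewrite k1 expr1 -k1.
by apply: le_trans B_le_D (ler_eXnr k_gt0 _); have := L_le_AD j; lra.
Qed.

Lemma poles_le_sum_mult :
  (forall j k, (1 <= k <= mu j)%N -> B j k / D j ^+ k <= 1) ->
  poles <= (\sum_(j < n) mu j)%:R.
Proof.
move=> term_le1; rewrite natr_sum; apply: ler_sum => j _.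
apply: le_trans (_ : \sum_(1 <= k < (mu j).+1) 1 <= _); last first.
  by rewrite sumr_const_nat subSS subn0.
by apply: ler_sum_nat => k; rewrite ltnS; apply: term_le1.
Qed.

Lemma root_le_coef_poles (T : F) :
  poles <= T -> L <= Num.max (\big[Num.max/0]_(1 <= i < m) (1 + C i)) (C 0%N + T).
Proof.
move=> poles_le; rewrite le_max; case: leP => //= /bigmax_lt_seqW C_lt.
have C_le i : (1 <= i < m)%N -> C i <= L - 1.
  by move=> i_in; have := C_lt i; rewrite mem_index_iota i_in => /(_ isT isT); lra.
have coef_le : \sum_(i < m) C i * L ^+ i <= C 0%N + (L ^+ m - L).
  rewrite -(big_mkord xpredT (fun i => C i * L ^+ i)) big_ltn // expr0 mulr1 lerD2l.
  have -> : L ^+ m - L = \sum_(1 <= i < m) (L ^+ i.+1 - L ^+ i).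
    by rewrite telescope_sumr // expr1.
  apply: ler_sum_nat => i i_in; rewrite exprS -[X in _ - X]mul1r -mulrBl.
  by rewrite ler_wpM2r ?exprn_ge0 ?C_le.
by have := le_trans root_ineq (lerD coef_le poles_le); lra.
Qed.

End RealRootBounds.

Lemma norm_root_ineq (R : realType) m n c a mu b (l : R[i]) :
  ratfun m c a mu b l = 0 ->
  `|l| ^+ m <= \sum_(i < m) `|c i| * `|l| ^+ i
               + \sum_(j < n) \sum_(1 <= k < (mu j).+1) `|b j k| / `|l - a j| ^+ k.
Proof.
rewrite /ratfun -addrA -opprD => /eqP; rewrite subr_eq0 => /eqP lm_eq.
rewrite -normrX lm_eq.
apply: le_trans (ler_normD _ _) _; apply: lerD.
  by apply: le_trans (ler_norm_sum _ _ _) _; apply: ler_sum => i _; rewrite normrM normrX.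
apply: le_trans (ler_norm_sum _ _ _) _; apply: ler_sum => j _.
apply: le_trans (ler_norm_sum _ _ _) _; apply: ler_sum => k _.
by rewrite normrM normfV normrX.
Qed.

Section RealPart.
Local Open Scope complex_scope.
Variable R : rcfType.
Implicit Types (X Y : R[i]) (x y : R).

Definition normR X : R := complex.Re `|X|.

Lemma normRE X : `|X| = (normR X)%:C.
Proof. by rewrite /normR normc_def. Qed.

Lemma normR_ge0 X : 0 <= normR X.
Proof. by rewrite -lecR -normRE rmorph0 normr_ge0. Qed.

Lemma realC_lec X Y x y : X = x%:C -> Y = y%:C -> x <= y -> X <= Y.
Proof. by move=> -> ->; rewrite lecR. Qed.

Lemma realC_ler X Y x y : X = x%:C -> Y = y%:C -> X <= Y -> x <= y.
Proof. by move=> -> ->; rewrite lecR. Qed.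

Lemma realC1 : 1 = (1 : R)%:C.
Proof. by rewrite rmorph1. Qed.

Lemma realC_nat k : k%:R = (k%:R : R)%:C.
Proof. by rewrite rmorph_nat. Qed.

Lemma realC_add X Y x y : X = x%:C -> Y = y%:C -> X + Y = (x + y)%:C.
Proof. by move=> -> ->; rewrite rmorphD. Qed.

Lemma realC_mul X Y x y : X = x%:C -> Y = y%:C -> X * Y = (x * y)%:C.
Proof. by move=> -> ->; rewrite rmorphM. Qed.

Lemma realC_exp X x k : X = x%:C -> X ^+ k = (x ^+ k)%:C.
Proof. by move=> ->; rewrite rmorphXn. Qed.

Lemma realC_inv X x : X = x%:C -> X^-1 = (x^-1)%:C.
Proof. by move=> ->; rewrite fmorphV. Qed.

Lemma realC_max X Y x y : X = x%:C -> Y = y%:C -> Num.max X Y = (Num.max x y)%:C.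
Proof. by move=> -> ->; rewrite /Order.max ltcR; case: ifP. Qed.

Lemma realC_sum I (r : seq I) (P : pred I) (F : I -> R[i]) (f : I -> R) :
  (forall i, P i -> F i = (f i)%:C) ->
  \sum_(i <- r | P i) F i = (\sum_(i <- r | P i) f i)%:C.
Proof. by move=> Ff; rewrite rmorph_sum; apply: eq_bigr. Qed.

Lemma realC_bigmax I (r : seq I) (P : pred I) (F : I -> R[i]) (f : I -> R) :
  (forall i, P i -> F i = (f i)%:C) ->
  \big[Num.max/0]_(i <- r | P i) F i = (\big[Num.max/0]_(i <- r | P i) f i)%:C.
Proof.
move=> Ff; elim/big_rec2: _ => [|i Y y Pi ->]; first by rewrite rmorph0.
by apply: realC_max; first exact: Ff.
Qed.

End RealPart.

(* Proves [E = e%:C] for E built from norms by ring operations, maxima and sums,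
   where e is E with every norm replaced by [normR]; e may be left as an evar. *)
Ltac realC_expr := repeat first
  [ exact: normRE | exact: realC1 | exact: realC_nat
  | apply: realC_add | apply: realC_mul | apply: realC_exp | apply: realC_inv
  | apply: realC_max | apply: realC_sum => ? _ | apply: realC_bigmax => ? _ ].

Theorem theorem3p3 (R : realType) (m n : nat) (hm : (1 <= m)%N) (hn : (1 <= n)%N)
  (a : 'I_n -> R[i]) (ha : injective a) (mu : 'I_n -> nat)
  (hmu : forall j, (1 <= mu j)%N) (c : nat -> R[i]) (b : 'I_n -> nat -> R[i])
  (l0 : R[i]) (hl0 : is_zero_of m c a mu b l0) :
  (* (1) *)
  `|l0| <= Num.max (\big[Num.max/0]_(j < n) (1 + `|a j|))
             (\sum_(j < n) \sum_(1 <= k < (mu j).+1) `|b j k| + \sum_(i < m) `|c i|)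
  /\
  (* (2), case all m_j = 1 *)
  ((forall j, mu j = 1%N) ->
     `|l0| <= Num.max (\big[Num.max/0]_(j < n) (`|a j| + `|b j 1%N|))
                (Num.max (\big[Num.max/0]_(1 <= i < m) (1 + `|c i|))
                         (`|c 0%N| + n%:R)))
  /\
  (* (2), otherwise *)
  (~ (forall j, mu j = 1%N) ->
     `|l0| <= Num.max
                (\big[Num.max/0]_(j < n)
                   Num.max (\big[Num.max/0]_(1 <= k < (mu j).+1) (`|a j| + `|b j k|))
                           (1 + `|a j|))
                (Num.max (\big[Num.max/0]_(1 <= i < m) (1 + `|c i|))
                         (`|c 0%N| + (\sum_(j < n) mu j)%:R))).
Proof.
(* Only r(l0) = 0 is used: [a] need not be injective, nor the m_j positive, and
   l0 could even be a pole, since division by 0 yields 0. *)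
case: hl0 => _ /norm_root_ineq root_ineqC.
set L := normR l0.
have root_ineq : L ^+ m <= \sum_(i < m) normR (c i) * L ^+ i
    + \sum_(j < n) \sum_(1 <= k < (mu j).+1) normR (b j k) / normR (l0 - a j) ^+ k.
  by apply: (realC_ler _ _ root_ineqC); realC_expr.
have L_le_AD j : L <= normR (a j) + normR (l0 - a j).
  apply: (realC_ler _ _ (ler_normD (a j) (l0 - a j))); last by realC_expr.
  by rewrite addrC subrK normRE.
have C_ge0 i := normR_ge0 (c i).
have B_ge0 j k := normR_ge0 (b j k).
have L_ge0 : 0 <= L := normR_ge0 l0.
have bound_coef_poles := root_le_coef_poles (C := fun i => normR (c i)) hm L_ge0 root_ineq.
split; [|split] => [|mu1|_]; apply: realC_lec (normRE l0) _ _; try by realC_expr.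
- rewrite le_max; case: leP => //= /bigmax_ltP[_ AL].
  have L_ge1 : 1 <= L by have := AL (Ordinal hn) isT; have := normR_ge0 (a (Ordinal hn)); lra.
  by apply: root_le_sum_coef hm C_ge0 B_ge0 L_le_AD root_ineq L_ge1 _ => j; apply/ltW/AL.
- rewrite le_max; case: leP => //= /bigmax_ltP[_ ABL].
  have -> : n%:R = (\sum_(j < n) mu j)%:R :> R.
    by rewrite (eq_bigr _ (fun j _ => mu1 j)) sum1_card card_ord.
  apply/bound_coef_poles/poles_le_sum_mult => j k; rewrite mu1 -eqn_leq => /eqP k1.
  rewrite -k1; apply: (pole_term_le1 B_ge0 L_le_AD) => //; last by left.
  exact/ltW/ABL.
- rewrite le_max; case: leP => //= /bigmax_ltP[_ AL].
  apply/bound_coef_poles/poles_le_sum_mult => j k k_in.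
  have := AL j isT; rewrite gt_max => /andP[/bigmax_lt_seqW ABL A1L].
  apply: (pole_term_le1 B_ge0 L_le_AD); first by case/andP: k_in.
    by apply/ltW/ABL => //; rewrite mem_index_iota ltnS.
  by right; apply: ltW.
Qed.
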